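(* Let $\alpha\in(0,1)$ be irrational, let $$C_n=\prod_{t=1}^{q_n-1}\Big(1-\frac{s_{n0}^2}{s_{nt}^2}\Big)^{1/2},$$ and let $\kappa_n=\lfloor q_n^{1/2}\rfloor$. Then for sufficiently large $n$, $$C_n=\prod_{t=1}^{\kappa_n}\Big(1-\frac1{4(t/c_n-\xi_{nt})^2}\Big)+O(\kappa_n^{-1}).$$
   Context: Continued fraction notation: - $\alpha=[0;a_1,a_2,\ldots]$. - $q_0=0$, $q_1=1$, $q_{n+1}=a_nq_n+q_{n-1}$, and $p_0=1$, $p_1=0$, $p_{n+1}=a_np_n+p_{n-1}$. - $\Lambda_n=q_n\alpha-p_n$. - $c_n=1/(\alpha_n^++\alpha_n^-)$, where $\alpha_n^+=[a_n;a_{n+1},\ldots]$ and $\alpha_n^-=[0;a_{n-1},\ldots,a_1]$. Auxiliary quantities, for $t\in\{0,\ldots,q_n-1\}$: - $\xi_{nt}=\{tq_{n-1}/q_n\}-\frac12$; - $s_{nt}=2\sin\big(\pi[t/q_n-|\Lambda_n|\xi_{nt}]\big)$. The $O$-constant is independent of $n$. *)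

From Stdlib Require Import Reals Lra Lia ZArith List.
Open Scope R_scope.

Fixpoint gauss (alpha : R) (k : nat) : R :=
  match k with
  | O => alpha
  | S k' => frac_part (/ gauss alpha k')
  end.

(* Partial quotients: alpha = [0; a 1, a 2, ...], a (k+1) = floor (1 / x k).
   (a 0 is unused and set to 0.) *)
Definition cf_digit (alpha : R) (n : nat) : nat :=
  match n with
  | O => O
  | S k => Z.to_nat (Int_part (/ gauss alpha k))
  end.

Fixpoint cf_q (alpha : R) (n : nat) : nat :=
  match n with
  | O => O
  | S O => 1%nat
  | S ((S m) as n') => (cf_digit alpha n' * cf_q alpha n' + cf_q alpha m)%nat
  end.

Fixpoint cf_p (alpha : R) (n : nat) : nat :=
  match n with
  | O => 1%nat
  | S O => O
  | S ((S m) as n') => (cf_digit alpha n' * cf_p alpha n' + cf_p alpha m)%nat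
  end.

Definition cf_Lambda (alpha : R) (n : nat) : R :=
  INR (cf_q alpha n) * alpha - INR (cf_p alpha n).

Fixpoint cf_fin (l : list nat) : R :=
  match l with
  | nil => 0
  | b :: l' => / (INR b + cf_fin l')
  end.

(* alpha_n^+ = [a_n; a_{n+1}, ...], the n-th complete quotient 1 / x_{n-1}
   (for n >= 1). *)
Definition alpha_plus (alpha : R) (n : nat) : R := / gauss alpha (pred n).

Definition alpha_minus (alpha : R) (n : nat) : R :=
  cf_fin (rev (map (cf_digit alpha) (seq 1 (pred n)))).

Definition cf_c (alpha : R) (n : nat) : R :=
  / (alpha_plus alpha n + alpha_minus alpha n).

Definition xi (alpha : R) (n t : nat) : R :=
  frac_part (INR t * INR (cf_q alpha (pred n)) / INR (cf_q alpha n)) - / 2.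

Definition s_nt (alpha : R) (n t : nat) : R :=
  2 * sin (PI * (INR t / INR (cf_q alpha n) - Rabs (cf_Lambda alpha n) * xi alpha n t)).

Definition prod1 (N : nat) (f : nat -> R) : R :=
  fold_right Rmult 1 (map f (seq 1 N)).

Definition C_n (alpha : R) (n : nat) : R :=
  prod1 (pred (cf_q alpha n))
    (fun t => sqrt (1 - (s_nt alpha n 0) ^ 2 / (s_nt alpha n t) ^ 2)).

Definition kappa (alpha : R) (n : nat) : nat := Nat.sqrt (cf_q alpha n).

Definition P_n (alpha : R) (n : nat) : R :=
  prod1 (kappa alpha n)
    (fun t => 1 - / (4 * (INR t / cf_c alpha n - xi alpha n t) ^ 2)).

Definition irrational (x : R) : Prop :=
  forall (p q : Z), q <> 0%Z -> x <> IZR p / IZR q.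

(* Write [u t = PI * (t / q_n - |Lambda_n| xi_nt)], so that [s_nt = 2 sin (u t)] and
   [u 0 = PI |Lambda_n| / 2]; since [c_n = q_n |Lambda_n|], the t-th factor of the finite
   product is [1 - (u 0 / u t) ^ 2].  As [q_n] and [q_(n-1)] are coprime,
   [xi_(n, q_n - t) = - xi_nt], hence [u (q_n - t) = PI - u t]: the factors of [C_n] at [t]
   and [q_n - t] coincide, and [C_n = P * M * P] with [P] the product over [t <= kappa_n].
   For [t <= kappa_n] the angle [u t] is [O(kappa_n / q_n)], so replacing the sines by
   the angles costs [O(u t ^ 2) = O(1 / q_n)] per factor and [O(kappa_n / q_n) = O(1 / kappa_n)]
   in [P ^ 2].  In the middle block [sin (u t)] is of order [min (t, q_n - t) / q_n], so
   [1 - M] is bounded by a telescoping sum of size [O(1 / kappa_n)]. *)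

From Stdlib Require Import Reals Lra Lia List ZArith.
Open Scope R_scope.

Lemma Rdiv_nonneg x y : 0 <= x -> 0 < y -> 0 <= x / y.
Proof. intros Hx Hy; apply Rmult_le_pos; [|apply Rlt_le, Rinv_0_lt_compat]; lra. Qed.

Lemma Rdiv_le_of_le_mul x y b : 0 < y -> x <= b * y -> x / y <= b.
Proof.
  intros Hy Hx; apply (Rmult_le_reg_r y); [lra|].
  unfold Rdiv; rewrite Rmult_assoc, Rinv_l; lra.
Qed.

Lemma sqrt_ge_self x : 0 <= x <= 1 -> x <= sqrt x.
Proof.
  intros Hx; pose proof (sqrt_sqrt x (proj1 Hx)); pose proof (sqrt_pos x).
  assert (sqrt x <= 1) by (rewrite <- sqrt_1; apply sqrt_le_1_alt; lra).
  nra.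
Qed.

Lemma sin_ge_cubic x : 0 <= x -> x <= PI -> x - x ^ 3 / 6 <= sin x.
Proof.
  intros Hx0 Hx1; destruct (sin_bound x 0 Hx0 Hx1) as [Hlb _].
  replace (x - x ^ 3 / 6) with (sin_approx x (2 * 0 + 1)); [exact Hlb|].
  unfold sin_approx, sin_term; simpl; field.
Qed.

Lemma sin_le_id x : 0 <= x -> sin x <= x.
Proof.
  intros Hx; destruct (Req_dec x 0) as [->|Hx0]; [rewrite sin_0; lra|].
  left; apply sin_lt_x; lra.
Qed.

Lemma sin_ge_third x : 0 <= x -> x <= PI / 2 -> x / 3 <= sin x.
Proof.
  intros Hx0 Hx1; pose proof PI_4.
  pose proof (sin_ge_cubic x Hx0 ltac:(lra)); assert (x ^ 2 <= 4) by nra; nra.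
Qed.

Lemma sin_ge_sin_on_arc a u : 0 <= a -> a <= u -> u <= PI - a -> sin a <= sin u.
Proof.
  intros Ha Hau Hua; pose proof PI_RGT_0.
  destruct (Rle_lt_dec u (PI / 2)) as [Hu|Hu].
  - apply sin_incr_1; lra.
  - rewrite <- (sin_PI_x u); apply sin_incr_1; lra.
Qed.

Lemma sin_sq_ratio_approx a u : 0 < a <= u -> u <= 1 ->
  Rabs (sin a ^ 2 / sin u ^ 2 - a ^ 2 / u ^ 2) <= u ^ 2.
Proof.
  intros [Ha Hau] Hu; pose proof PI2_1.
  pose proof (sin_ge_cubic a ltac:(lra) ltac:(lra)) as Hla.
  pose proof (sin_ge_cubic u ltac:(lra) ltac:(lra)) as Hlu.
  pose proof (sin_le_id a ltac:(lra)) as Hua.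
  pose proof (sin_le_id u ltac:(lra)) as Huu.
  set (sa := sin a) in *; set (su := sin u) in *.
  set (c := 1 - u ^ 2 / 6).
  assert (Hc : 5 / 6 <= c <= 1) by (unfold c; nra).
  assert (Hsu : u * c <= su) by (unfold c; nra).
  assert (Hsu0 : 0 < su) by nra.
  assert (Hsa2 : a ^ 2 - a ^ 4 / 3 <= sa ^ 2 <= a ^ 2).
  { assert (a * (1 - a ^ 2 / 6) <= sa) by nra.
    assert (0 <= a * (1 - a ^ 2 / 6)) by nra; nra. }
  assert (Hau4 : a ^ 4 <= u ^ 4) by (apply pow_incr; lra).
  apply Rabs_le; split.
  - assert (E : (a ^ 2 - u ^ 4) / u ^ 2 = a ^ 2 / u ^ 2 - u ^ 2) by (field; lra).
    enough ((a ^ 2 - u ^ 4) / u ^ 2 <= sa ^ 2 / su ^ 2) by lra.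
    apply Rle_trans with (sa ^ 2 / u ^ 2).
    { apply Rmult_le_compat_r; [apply Rlt_le, Rinv_0_lt_compat|]; nra. }
    apply Rmult_le_compat_l; [nra|]; apply Rinv_le_contravar; nra.
  - apply Rle_trans with (a ^ 2 / (u * c) ^ 2 - a ^ 2 / u ^ 2).
    { unfold Rminus; apply Rplus_le_compat_r, Rmult_le_compat; try nra.
      - apply Rlt_le, Rinv_0_lt_compat; nra.
      - apply Rinv_le_contravar; [nra|]; apply pow_incr; nra. }
    replace (a ^ 2 / (u * c) ^ 2 - a ^ 2 / u ^ 2)
      with ((a / u) ^ 2 * ((1 - c ^ 2) / c ^ 2)) by (field; lra).
    assert (Hq : 0 <= a / u <= 1).
    { split; [apply Rdiv_nonneg|apply Rdiv_le_of_le_mul]; lra. }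
    assert (Hr : 0 <= (1 - c ^ 2) / c ^ 2 <= u ^ 2).
    { split; [apply Rdiv_nonneg|apply Rdiv_le_of_le_mul]; unfold c in *; nra. }
    assert (0 <= (a / u) ^ 2 <= 1) by nra.
    nra.
Qed.

Lemma sq_ratio_le_telescope_step Q M s v : 0 < Q -> 2 <= M ->
  0 <= s <= PI / (2 * Q) -> PI * (M - 1 / 2) / (3 * Q) <= v ->
  s ^ 2 / v ^ 2 <= 9 / 4 * (1 / (M - 1) - 1 / M).
Proof.
  intros HQ HM Hs Hv; pose proof PI_RGT_0.
  assert (Hv0 : 0 < PI * (M - 1 / 2) / (3 * Q)) by (apply Rdiv_lt_0_compat; nra).
  apply Rle_trans with ((PI / (2 * Q)) ^ 2 / (PI * (M - 1 / 2) / (3 * Q)) ^ 2).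
  { apply Rmult_le_compat; try apply pow_le; try lra.
    - apply Rlt_le, Rinv_0_lt_compat; nra.
    - apply pow_incr; lra.
    - apply Rinv_le_contravar; [nra|]; apply pow_incr; lra. }
  replace ((PI / (2 * Q)) ^ 2 / (PI * (M - 1 / 2) / (3 * Q)) ^ 2)
    with (9 / 4 * / (M - 1 / 2) ^ 2) by (field; lra).
  replace (1 / (M - 1) - 1 / M) with (/ (M * (M - 1))) by (field; lra).
  apply Rmult_le_compat_l; [lra|]; apply Rinv_le_contravar; nra.
Qed.

Definition prodR (l : list nat) (f : nat -> R) : R := fold_right Rmult 1 (map f l).

Lemma prod1_prodR N f : prod1 N f = prodR (seq 1 N) f.
Proof. reflexivity. Qed.

Lemma prodR_nil f : prodR nil f = 1.
Proof. reflexivity. Qed.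

Lemma prodR_cons t l f : prodR (t :: l) f = f t * prodR l f.
Proof. reflexivity. Qed.

Lemma prodR_app l1 l2 f : prodR (l1 ++ l2) f = prodR l1 f * prodR l2 f.
Proof.
  induction l1 as [|t l1 IH]; simpl app; rewrite ?prodR_nil, ?prodR_cons, ?IH; ring.
Qed.

Lemma prodR_mult l f g : prodR l (fun t => f t * g t) = prodR l f * prodR l g.
Proof. induction l as [|t l IH]; rewrite ?prodR_nil, ?prodR_cons, ?IH; ring. Qed.

Lemma prodR_ext l f g : (forall t, In t l -> f t = g t) -> prodR l f = prodR l g.
Proof.
  induction l as [|t l IH]; intros Hfg; [reflexivity|].
  rewrite !prodR_cons, Hfg, IH; auto using in_eq, in_cons.
Qed.

Lemma prodR_unit_interval l f : (forall t, In t l -> 0 <= f t <= 1) ->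
  0 <= prodR l f <= 1.
Proof.
  induction l as [|t l IH]; intros Hf; rewrite ?prodR_nil, ?prodR_cons; [lra|].
  pose proof (Hf t (in_eq t l)).
  assert (0 <= prodR l f <= 1) by (apply IH; auto using in_cons).
  nra.
Qed.

Lemma prodR_dist_le l f g e :
  (forall t, In t l -> 0 <= f t <= 1 /\ 0 <= g t <= 1 /\ Rabs (f t - g t) <= e) ->
  Rabs (prodR l f - prodR l g) <= INR (length l) * e.
Proof.
  induction l as [|t l IH]; intros Hfg.
  - rewrite !prodR_nil, Rminus_diag, Rabs_R0; simpl; lra.
  - assert (Hl : forall s, In s l -> 0 <= f s <= 1 /\ 0 <= g s <= 1 /\ Rabs (f s - g s) <= e)
      by auto using in_cons.
    destruct (Hfg t (in_eq t l)) as (Hf & Hg & He).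
    pose proof (IH Hl) as IHl.
    pose proof (prodR_unit_interval l g (fun s Hs => proj1 (proj2 (Hl s Hs)))).
    rewrite !prodR_cons, length_cons, S_INR.
    replace (f t * prodR l f - g t * prodR l g)
      with (f t * (prodR l f - prodR l g) + (f t - g t) * prodR l g) by ring.
    eapply Rle_trans; [apply Rabs_triang|].
    rewrite !Rabs_mult, (Rabs_pos_eq (f t)), (Rabs_pos_eq (prodR l g)) by lra.
    pose proof (Rabs_pos (prodR l f - prodR l g)); pose proof (Rabs_pos (f t - g t)).
    nra.
Qed.

Lemma prodR_seq_ge_telescope s n f h :
  (forall t, (s <= t < s + n)%nat -> 0 <= f t <= 1 /\ 1 - f t <= h t - h (S t)) ->
  1 - (h s - h (s + n)%nat) <= prodR (seq s n) f.
Proof.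
  revert s; induction n as [|n IH]; intros s Hf.
  - rewrite Nat.add_0_r, prodR_nil; lra.
  - change (seq s (S n)) with (s :: seq (S s) n); rewrite prodR_cons.
    destruct (Hf s ltac:(lia)) as [Hfs Hhs].
    assert (IHs : 1 - (h (S s) - h (S s + n)%nat) <= prodR (seq (S s) n) f)
      by (apply IH; intros t Ht; apply Hf; lia).
    assert (0 <= prodR (seq (S s) n) f <= 1)
      by (apply prodR_unit_interval; intros t Ht; apply in_seq in Ht; apply Hf; lia).
    replace (s + S n)%nat with (S s + n)%nat by lia.
    nra.
Qed.

Lemma prodR_seq_reflect q k F : (k <= q)%nat ->
  prodR (seq (q - k) k) F = prodR (seq 1 k) (fun t => F (q - t)%nat).
Proof.
  induction k as [|k IH]; intros Hk; [reflexivity|].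
  replace (seq (q - S k) (S k)) with ((q - S k)%nat :: seq (q - k) k)
    by (simpl; f_equal; f_equal; lia).
  rewrite seq_S, prodR_cons, prodR_app, IH by lia.
  rewrite prodR_cons, prodR_nil; replace (1 + k)%nat with (S k) by lia; ring.
Qed.

Definition sine_angle (q : nat) (L : R) (xi : nat -> R) (t : nat) : R :=
  PI * (INR t / INR q - L * xi t).

Section ReflectedSineProduct.

Variables (q : nat) (L : R) (xi : nat -> R).
Hypotheses (Hq : (0 < q)%nat) (HL : 0 < L) (HLq : L * INR q < 1)
  (Hxi0 : xi 0%nat = - / 2)
  (Hxi : forall t, (1 <= t < q)%nat -> - / 2 <= xi t <= / 2).

Local Notation Q := (INR q).
Local Notation u := (sine_angle q L xi).

Definition sine_factor (t : nat) : R := 1 - sin (u 0%nat) ^ 2 / sin (u t) ^ 2.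
Definition angle_factor (t : nat) : R := 1 - u 0%nat ^ 2 / u t ^ 2.

Let Q_pos : 0 < Q := lt_0_INR q Hq.

Lemma sine_angle_0_bounds : 0 < u 0%nat < PI / (2 * Q).
Proof.
  pose proof Q_pos; pose proof PI_RGT_0.
  unfold sine_angle; rewrite Hxi0; simpl INR.
  replace (PI * (0 / Q - L * - / 2)) with (PI * L / 2) by (field; lra).
  split; [nra|]; apply Rmult_lt_reg_r with (2 * Q); [lra|].
  replace (PI / (2 * Q) * (2 * Q)) with PI by (field; lra); nra.
Qed.

Lemma sine_angle_bounds t : (1 <= t < q)%nat ->
  PI * (INR t - / 2) / Q <= u t <= PI * (INR t + / 2) / Q.
Proof.
  intros Ht; pose proof Q_pos; pose proof PI_RGT_0; destruct (Hxi t Ht).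
  assert (HLQ : - / 2 <= L * Q * xi t <= / 2).
  { assert (0 < L * Q) by nra; split; nra. }
  unfold sine_angle.
  replace (PI * (INR t / Q - L * xi t)) with (PI * (INR t - L * Q * xi t) / Q) by (field; lra).
  split; apply Rmult_le_compat_r; try apply Rlt_le, Rinv_0_lt_compat; nra.
Qed.

Lemma sine_angle_inner t : (1 <= t < q)%nat -> u 0%nat < u t < PI - u 0%nat.
Proof.
  intros Ht; pose proof Q_pos; pose proof PI_RGT_0.
  pose proof sine_angle_0_bounds; destruct (sine_angle_bounds t Ht) as [Hlo Hhi].
  assert (HT : 1 <= INR t <= Q - 1).
  { split; [apply (le_INR 1); lia|].
    rewrite <- (INR_1 : INR 1 = 1), <- minus_INR by lia; apply le_INR; lia. }
  assert (PI / (2 * Q) <= PI * (INR t - / 2) / Q).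
  { replace (PI / (2 * Q)) with (PI * (1 - / 2) / Q) by (field; lra).
    apply Rmult_le_compat_r; [apply Rlt_le, Rinv_0_lt_compat|]; nra. }
  assert (PI * (INR t + / 2) / Q <= PI - PI / (2 * Q)).
  { replace (PI - PI / (2 * Q)) with (PI * (Q - / 2) / Q) by (field; lra).
    apply Rmult_le_compat_r; [apply Rlt_le, Rinv_0_lt_compat|]; nra. }
  lra.
Qed.

Lemma sin_sine_angle_pos t : (1 <= t < q)%nat -> 0 < sin (u t).
Proof.
  intros Ht; pose proof (sine_angle_inner t Ht); pose proof sine_angle_0_bounds.
  apply sin_gt_0; lra.
Qed.

Lemma sine_factor_unit_interval t : (1 <= t < q)%nat -> 0 <= sine_factor t <= 1.
Proof.
  intros Ht; pose proof (sine_angle_inner t Ht); pose proof sine_angle_0_bounds.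
  pose proof (sin_sine_angle_pos t Ht).
  assert (0 <= sin (u 0%nat) <= sin (u t))
    by (split; [apply sin_ge_0|apply sin_ge_sin_on_arc]; lra).
  unfold sine_factor.
  assert (0 <= sin (u 0%nat) ^ 2 / sin (u t) ^ 2 <= 1); [|lra].
  split; [apply Rdiv_nonneg|apply Rdiv_le_of_le_mul]; nra.
Qed.

Lemma angle_factor_unit_interval t : (1 <= t < q)%nat -> 0 <= angle_factor t <= 1.
Proof.
  intros Ht; pose proof (sine_angle_inner t Ht); pose proof sine_angle_0_bounds.
  unfold angle_factor.
  assert (0 <= u 0%nat ^ 2 / u t ^ 2 <= 1); [|lra].
  split; [apply Rdiv_nonneg|apply Rdiv_le_of_le_mul]; nra.
Qed.

Lemma sine_factor_reflect t : (1 <= t < q)%nat -> xi (q - t)%nat = - xi t ->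
  sine_factor (q - t) = sine_factor t.
Proof.
  intros Ht Hr; pose proof Q_pos; unfold sine_factor.
  replace (u (q - t)%nat) with (PI - u t); [now rewrite sin_PI_x|].
  unfold sine_angle; rewrite Hr, minus_INR by lia; field; lra.
Qed.

Variable k : nat.
Hypotheses (Hk : (1 <= k)%nat) (Hkq : (k * k <= q)%nat) (Hkq8 : (8 * k + 8 <= q)%nat).

Local Notation K := (INR k).

Let K_bounds : 1 <= K /\ K * K <= Q /\ 8 * K + 8 <= Q.
Proof.
  split; [apply (le_INR 1); lia|]; split.
  - rewrite <- mult_INR; apply le_INR; lia.
  - replace (8 * K + 8) with (INR (8 * k + 8)) by (rewrite plus_INR, mult_INR; simpl; ring).
    apply le_INR; lia.
Qed.

Lemma outer_factor_close t : (1 <= t <= k)%nat ->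
  Rabs (sine_factor t - angle_factor t) <= 64 / Q.
Proof.
  intros Ht; pose proof Q_pos; pose proof PI_4; destruct K_bounds as (HK1 & HKK & HK8).
  assert (Htq : (1 <= t < q)%nat) by lia.
  pose proof (sine_angle_inner t Htq); pose proof sine_angle_0_bounds.
  destruct (sine_angle_bounds t Htq) as [_ Hhi].
  assert (HtK : INR t <= K) by (apply le_INR; lia).
  assert (HuQ : u t * Q <= 8 * K).
  { assert (u t * Q <= PI * (INR t + / 2) / Q * Q) by (apply Rmult_le_compat_r; lra).
    replace (PI * (INR t + / 2) / Q * Q) with (PI * (INR t + / 2)) in * by (field; lra).
    nra. }
  assert (Hu1 : u t <= 1) by nra.
  assert (Hu64 : u t ^ 2 <= 64 / Q).
  { apply Rle_trans with ((8 * K) ^ 2 / Q ^ 2).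
    - replace (u t ^ 2) with ((u t * Q) ^ 2 / Q ^ 2) by (field; lra).
      apply Rmult_le_compat_r; [apply Rlt_le, Rinv_0_lt_compat; nra|].
      apply pow_incr; nra.
    - apply Rdiv_le_of_le_mul; [nra|].
      replace (64 / Q * Q ^ 2) with (64 * Q) by (field; lra); nra. }
  unfold sine_factor, angle_factor.
  replace (1 - sin (u 0%nat) ^ 2 / sin (u t) ^ 2 - (1 - u 0%nat ^ 2 / u t ^ 2))
    with (- (sin (u 0%nat) ^ 2 / sin (u t) ^ 2 - u 0%nat ^ 2 / u t ^ 2)) by ring.
  rewrite Rabs_Ropp; eapply Rle_trans; [apply sin_sq_ratio_approx|]; lra.
Qed.

Lemma outer_product_close :
  Rabs (prodR (seq 1 k) sine_factor - prodR (seq 1 k) angle_factor) <= 64 / K.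
Proof.
  pose proof Q_pos; destruct K_bounds as (HK1 & HKK & HK8).
  eapply Rle_trans.
  - apply prodR_dist_le; intros t Ht; apply in_seq in Ht.
    split; [|split]; [apply sine_factor_unit_interval|apply angle_factor_unit_interval|
      apply outer_factor_close]; lia.
  - rewrite length_seq; apply (Rmult_le_reg_r (K * Q)); [nra|].
    replace (K * (64 / Q) * (K * Q)) with (64 * (K * K)) by (field; lra).
    replace (64 / K * (K * Q)) with (64 * Q) by (field; lra).
    lra.
Qed.

(* With [m = min (t, q - t)], the bound [sin x >= x / 3] on [[0, PI / 2]] gives
   [sin (u 0) ^ 2 / sin (u t) ^ 2 <= 9 / 4 / (m - 1 / 2) ^ 2 <= 9 / 4 * (1 / (m - 1) - 1 / m)],
   an increment of this majorant. *)
Definition middle_majorant (t : nat) : R := 9 / 4 * (1 / (INR t - 1) - 1 / (Q - INR t)).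

Lemma sine_ratio_le_majorant_step t : (k < t < q - k)%nat ->
  sin (u 0%nat) ^ 2 / sin (u t) ^ 2 <= middle_majorant t - middle_majorant (S t).
Proof.
  intros Ht; pose proof Q_pos; pose proof PI_RGT_0; destruct K_bounds as (HK1 & HKK & HK8).
  assert (Htq : (1 <= t < q)%nat) by lia.
  pose proof (sine_angle_inner t Htq) as Hin; pose proof sine_angle_0_bounds as Hu0.
  destruct (sine_angle_bounds t Htq) as [Hlo Hhi].
  assert (HT : K + 1 <= INR t) by (rewrite <- S_INR; apply le_INR; lia).
  assert (HT' : K + 1 <= Q - INR t) by (rewrite <- S_INR, <- minus_INR by lia; apply le_INR; lia).
  assert (Hs : 0 <= sin (u 0%nat) <= PI / (2 * Q)).
  { split; [apply sin_ge_0|eapply Rle_trans; [apply sin_le_id|]]; lra. }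
  assert (Hstep : middle_majorant t - middle_majorant (S t)
    = 9 / 4 * (1 / (INR t - 1) - 1 / INR t) + 9 / 4 * (1 / (Q - INR t - 1) - 1 / (Q - INR t))).
  { unfold middle_majorant; rewrite S_INR; field; repeat split; lra. }
  assert (Hpos : forall M, 2 <= M -> 0 <= 1 / (M - 1) - 1 / M).
  { intros M HM; replace (1 / (M - 1) - 1 / M) with (/ (M * (M - 1))) by (field; lra).
    apply Rlt_le, Rinv_0_lt_compat; nra. }
  pose proof (Hpos (INR t) ltac:(lra)); pose proof (Hpos (Q - INR t) ltac:(lra)).
  rewrite Hstep; destruct (Rle_lt_dec (u t) (PI / 2)) as [Hc|Hc].
  - enough (sin (u 0%nat) ^ 2 / sin (u t) ^ 2 <= 9 / 4 * (1 / (INR t - 1) - 1 / INR t))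
      by lra.
    apply sq_ratio_le_telescope_step with Q; try lra.
    pose proof (sin_ge_third (u t) ltac:(lra) Hc).
    replace (PI * (INR t - 1 / 2) / (3 * Q)) with (PI * (INR t - / 2) / Q / 3) by (field; lra).
    lra.
  - enough (sin (u 0%nat) ^ 2 / sin (u t) ^ 2
        <= 9 / 4 * (1 / (Q - INR t - 1) - 1 / (Q - INR t))) by lra.
    rewrite <- (sin_PI_x (u t)).
    apply sq_ratio_le_telescope_step with Q; try lra.
    pose proof (sin_ge_third (PI - u t) ltac:(lra) ltac:(lra)).
    replace (PI * (Q - INR t - 1 / 2) / (3 * Q)) with ((PI - PI * (INR t + / 2) / Q) / 3)
      by (field; lra).
    lra.
Qed.

Lemma middle_product_ge :
  1 - 9 / 2 / K <= prodR (seq (S k) (q - 1 - 2 * k)) (fun t => sqrt (sine_factor t)).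
Proof.
  pose proof Q_pos; destruct K_bounds as (HK1 & HKK & HK8).
  eapply Rle_trans; [|apply prodR_seq_ge_telescope with (h := middle_majorant)].
  - replace (S k + (q - 1 - 2 * k))%nat with (q - k)%nat by lia.
    unfold middle_majorant; rewrite minus_INR, S_INR by lia.
    assert (0 <= 2 / (Q - K - 1)) by (apply Rdiv_nonneg; lra).
    replace (9 / 4 * (1 / (K + 1 - 1) - 1 / (Q - (K + 1)))
             - 9 / 4 * (1 / (Q - K - 1) - 1 / (Q - (Q - K))))
      with (9 / 4 * (2 / K - 2 / (Q - K - 1))) by (field; lra).
    lra.
  - intros t Ht; assert (Htq : (1 <= t < q)%nat) by lia.
    pose proof (sine_factor_unit_interval t Htq) as Hf.
    pose proof (sqrt_ge_self _ Hf).
    assert (sqrt (sine_factor t) <= 1) by (rewrite <- sqrt_1; apply sqrt_le_1_alt; lra).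
    pose proof (sine_ratio_le_majorant_step t ltac:(lia)).
    unfold sine_factor in *; split; [split; [apply sqrt_pos|]|]; lra.
Qed.

Hypothesis Hxi_reflect : forall t, (1 <= t <= k)%nat -> xi (q - t)%nat = - xi t.

Lemma sine_factor_product_estimate :
  Rabs (prodR (seq 1 (pred q)) (fun t => sqrt (sine_factor t))
        - prodR (seq 1 k) angle_factor) <= 100 / K.
Proof.
  pose proof Q_pos; destruct K_bounds as (HK1 & HKK & HK8).
  set (F t := sqrt (sine_factor t)).
  set (P := prodR (seq 1 k) F).
  set (M := prodR (seq (S k) (q - 1 - 2 * k)) F).
  assert (Hsplit : prodR (seq 1 (pred q)) F = P * M * P).
  { replace (pred q) with (k + ((q - 1 - 2 * k) + k))%nat by lia.
    rewrite !seq_app, !prodR_app; replace (1 + k + (q - 1 - 2 * k))%nat with (q - k)%nat by lia.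
    rewrite prodR_seq_reflect by lia.
    unfold P, M; simpl (1 + k)%nat; rewrite Rmult_assoc; do 2 f_equal.
    apply prodR_ext; intros t Ht; apply in_seq in Ht.
    unfold F; rewrite sine_factor_reflect by (try apply Hxi_reflect; lia); reflexivity. }
  assert (HPP : P * P = prodR (seq 1 k) sine_factor).
  { unfold P; rewrite <- prodR_mult; apply prodR_ext; intros t Ht; apply in_seq in Ht.
    apply sqrt_sqrt, sine_factor_unit_interval; lia. }
  assert (HPP01 : 0 <= P * P <= 1).
  { rewrite HPP; apply prodR_unit_interval; intros t Ht; apply in_seq in Ht.
    apply sine_factor_unit_interval; lia. }
  assert (HM01 : 0 <= M <= 1).
  { apply prodR_unit_interval; intros t Ht; apply in_seq in Ht.
    assert (Htq : (1 <= t < q)%nat) by lia.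
    pose proof (sine_factor_unit_interval t Htq).
    unfold F; split; [apply sqrt_pos|rewrite <- sqrt_1; apply sqrt_le_1_alt; lra]. }
  pose proof outer_product_close as Hout; rewrite <- HPP in Hout.
  pose proof middle_product_ge as Hmid; fold F M in Hmid.
  rewrite Hsplit.
  replace (P * M * P - prodR (seq 1 k) angle_factor)
    with ((P * P - prodR (seq 1 k) angle_factor) + - (P * P * (1 - M))) by ring.
  eapply Rle_trans; [apply Rabs_triang|].
  rewrite Rabs_Ropp, Rabs_mult, (Rabs_pos_eq (P * P)), (Rabs_pos_eq (1 - M)) by lra.
  assert (64 / K + 9 / 2 / K <= 100 / K).
  { unfold Rdiv; assert (0 < / K) by (apply Rinv_0_lt_compat; lra); nra. }
  nra.
Qed.

Theorem reflected_sine_product_estimate :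
  Rabs (prod1 (pred q) (fun t => sqrt (1 - (2 * sin (u 0%nat)) ^ 2 / (2 * sin (u t)) ^ 2))
        - prod1 k (fun t => 1 - / (4 * (INR t / (Q * L) - xi t) ^ 2))) <= 100 / K.
Proof.
  pose proof Q_pos; pose proof PI_RGT_0; rewrite !prod1_prodR.
  erewrite prodR_ext, (prodR_ext (seq 1 k)); [apply sine_factor_product_estimate| |].
  - intros t Ht; apply in_seq in Ht; assert (Htq : (1 <= t < q)%nat) by lia.
    pose proof (sine_angle_inner t Htq); pose proof sine_angle_0_bounds.
    assert (E0 : u 0%nat = PI * L / 2)
      by (unfold sine_angle; rewrite Hxi0; simpl INR; field; lra).
    assert (Et : u t = PI * L * (INR t / (Q * L) - xi t)) by (unfold sine_angle; field; lra).
    assert (INR t / (Q * L) - xi t <> 0) by (intros Z; rewrite Z, Rmult_0_r in Et; lra).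
    unfold angle_factor; rewrite E0, Et.
    set (d := INR t / (Q * L) - xi t) in *; clearbody d.
    field; repeat split; lra.
  - intros t Ht; apply in_seq in Ht; assert (Htq : (1 <= t < q)%nat) by lia.
    pose proof (sin_sine_angle_pos t Htq).
    unfold sine_factor; f_equal; field; lra.
Qed.

End ReflectedSineProduct.

Definition rational (x : R) : Prop := exists p q : Z, q <> 0%Z /\ x = IZR p / IZR q.

Lemma rational_of_frac_part y : rational (frac_part y) -> rational y.
Proof.
  intros (p & q & Hq & E); exists (Int_part y * q + p)%Z, q; split; [exact Hq|].
  rewrite (Rplus_Int_part_frac_part y) at 1; rewrite E, plus_IZR, mult_IZR.
  field; apply not_0_IZR; exact Hq.
Qed.

Lemma rational_inv y : rational y -> rational (/ y).
Proof.
  intros (p & q & Hq & ->).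
  destruct (Z.eq_dec p 0) as [->|Hp].
  - exists 0%Z, 1%Z; split; [lia|]; unfold Rdiv; rewrite Rmult_0_l, Rinv_0; simpl; field.
  - exists q, p; split; [exact Hp|]; field; split; apply not_0_IZR; assumption.
Qed.

Lemma gauss_in_unit_interval alpha : 0 < alpha < 1 -> irrational alpha ->
  forall k, 0 < gauss alpha k < 1.
Proof.
  intros Ha Hirr.
  assert (Hrat : forall k, 0 < gauss alpha k < 1 /\ (rational (gauss alpha k) -> rational alpha)).
  { induction k as [|k [Hk IH]]; [split; auto|].
    assert (Hr : rational (gauss alpha (S k)) -> rational alpha).
    { intros Hr; apply IH; rewrite <- (Rinv_inv (gauss alpha k)).
      apply rational_inv, rational_of_frac_part; exact Hr. }
    split; [|exact Hr].
    simpl; destruct (base_fp (/ gauss alpha k)) as [B0 B1]; split; [|lra].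
    destruct (Rge_gt_or_eq_dec _ _ B0) as [G|G]; [lra|exfalso].
    destruct (Hr ltac:(exists 0%Z, 1%Z; simpl; rewrite G; split; [lia|field]))
      as (p & q & Hq & E).
    exact (Hirr p q Hq E). }
  intros k; apply Hrat.
Qed.

Lemma cf_q_SS alpha m :
  cf_q alpha (S (S m)) = (cf_digit alpha (S m) * cf_q alpha (S m) + cf_q alpha m)%nat.
Proof. reflexivity. Qed.

Lemma cf_p_SS alpha m :
  cf_p alpha (S (S m)) = (cf_digit alpha (S m) * cf_p alpha (S m) + cf_p alpha m)%nat.
Proof. reflexivity. Qed.

Lemma cf_det alpha m :
  let d := (Z.of_nat (cf_q alpha (S m)) * Z.of_nat (cf_p alpha m)
            - Z.of_nat (cf_p alpha (S m)) * Z.of_nat (cf_q alpha m))%Z in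
  d = 1%Z \/ d = (-1)%Z.
Proof.
  induction m as [|m IH]; [simpl; lia|]; cbv zeta in *.
  rewrite cf_q_SS, cf_p_SS, !Nat2Z.inj_add, !Nat2Z.inj_mul.
  set (a := Z.of_nat (cf_digit alpha (S m))).
  set (q1 := Z.of_nat (cf_q alpha (S m))); set (q0 := Z.of_nat (cf_q alpha m)).
  set (p1 := Z.of_nat (cf_p alpha (S m))); set (p0 := Z.of_nat (cf_p alpha m)) in *.
  replace ((a * q1 + q0) * p1 - (a * p1 + p0) * q1)%Z with (- (q1 * p0 - p1 * q0))%Z by ring.
  lia.
Qed.

Lemma frac_part_INR n : frac_part (INR n) = 0.
Proof. unfold frac_part; rewrite Int_part_INR, <- INR_IZR_INZ; ring. Qed.

Lemma xi_0 alpha n : xi alpha n 0 = - / 2.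
Proof. unfold xi; simpl INR; rewrite Rmult_0_l, Rdiv_0_l, fp_R0; ring. Qed.

Lemma xi_bounds alpha n t : - / 2 <= xi alpha n t <= / 2.
Proof.
  unfold xi; destruct (base_fp (INR t * INR (cf_q alpha (pred n)) / INR (cf_q alpha n))); lra.
Qed.

Lemma cf_q_not_dvd alpha m t : (1 <= t < cf_q alpha (S m))%nat ->
  ~ (Z.of_nat (cf_q alpha (S m)) | Z.of_nat t * Z.of_nat (cf_q alpha m))%Z.
Proof.
  intros Ht [c Hc]; pose proof (cf_det alpha m) as Hdet; cbv zeta in Hdet.
  set (T := Z.of_nat t) in *.
  set (q1 := Z.of_nat (cf_q alpha (S m))) in *; set (q0 := Z.of_nat (cf_q alpha m)) in *.
  set (p1 := Z.of_nat (cf_p alpha (S m))) in *; set (p0 := Z.of_nat (cf_p alpha m)) in *.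
  set (d := (q1 * p0 - p1 * q0)%Z) in *.
  assert (Hd2 : (d * d = 1)%Z) by (destruct Hdet as [E|E]; rewrite E; reflexivity).
  assert (HTd : (T * d = (T * p0 - p1 * c) * q1)%Z).
  { unfold d; replace (T * (q1 * p0 - p1 * q0))%Z with (T * q1 * p0 - p1 * (T * q0))%Z by ring.
    rewrite Hc; ring. }
  assert (Hdvd : (q1 | T)%Z).
  { exists ((T * p0 - p1 * c) * d)%Z.
    rewrite <- (Z.mul_1_r T) at 1; rewrite <- Hd2, Z.mul_assoc, HTd; ring. }
  apply Z.divide_pos_le in Hdvd; unfold T, q1 in *; lia.
Qed.

Lemma xi_reflect alpha m t : (1 <= t < cf_q alpha (S m))%nat ->
  xi alpha (S m) (cf_q alpha (S m) - t) = - xi alpha (S m) t.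
Proof.
  intros Ht; unfold xi; simpl pred.
  set (q1 := cf_q alpha (S m)) in *; set (q0 := cf_q alpha m).
  assert (Hq1 : 0 < INR q1) by (apply lt_0_INR; lia).
  set (y := INR t * INR q0 / INR q1).
  assert (Hy : frac_part y <> 0).
  { intros Hfr; destruct (fp_nat y Hfr) as [c Hc].
    apply (cf_q_not_dvd alpha m t Ht); exists c.
    apply eq_IZR; rewrite mult_IZR, mult_IZR, <- !INR_IZR_INZ.
    unfold y in Hc; apply (Rmult_eq_reg_r (/ INR q1)); [|apply Rinv_neq_0_compat; lra].
    fold q0 q1; rewrite <- Hc; field; lra. }
  replace (INR (q1 - t) * INR q0 / INR q1) with (INR q0 - y)
    by (unfold y; rewrite minus_INR by lia; field; lra).
  destruct (base_fp y).
  rewrite Rminus_fp2, frac_part_INR by (rewrite frac_part_INR; lra); lra.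
Qed.

Section ContinuedFraction.

Variable alpha : R.
Hypothesis Hgauss : forall k, 0 < gauss alpha k < 1.

Lemma complete_quotient_gt_1 k : 1 < / gauss alpha k.
Proof.
  destruct (Hgauss k); rewrite <- Rinv_1; apply Rinv_lt_contravar; lra.
Qed.

Lemma cf_digit_spec k :
  INR (cf_digit alpha (S k)) = / gauss alpha k - gauss alpha (S k)
  /\ (1 <= cf_digit alpha (S k))%nat.
Proof.
  pose proof (complete_quotient_gt_1 k) as Hy; simpl; set (y := / gauss alpha k) in *.
  destruct (base_Int_part y) as [B1 B2].
  assert (HI : (0 < Int_part y)%Z) by (apply lt_IZR; lra).
  split; [|lia].
  rewrite INR_IZR_INZ, Z2Nat.id by lia; unfold frac_part; ring.
Qed.

Lemma cf_q_ge m : (1 <= cf_q alpha (S m))%nat /\ (m <= cf_q alpha (S m))%nat.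
Proof.
  assert (Hstep : forall n,
    (1 <= cf_q alpha (S n))%nat /\ (n + 1 <= cf_q alpha (S (S n)))%nat).
  { intros n; induction n as [|n [IH1 IH2]].
    - rewrite cf_q_SS; destruct (cf_digit_spec 0) as [_ D]; simpl cf_q; lia.
    - split; [lia|]; rewrite (cf_q_SS alpha (S n)).
      destruct (cf_digit_spec (S n)) as [_ D]; nia. }
  destruct m as [|m]; [simpl; lia|]; destruct (Hstep m); lia.
Qed.

Lemma cf_complete_quotient_identity m :
  alpha * (INR (cf_q alpha (S m)) * / gauss alpha m + INR (cf_q alpha m))
  = INR (cf_p alpha (S m)) * / gauss alpha m + INR (cf_p alpha m).
Proof.
  induction m as [|m IH].
  - pose proof (Hgauss 0) as H0; simpl in *; field; lra.
  - rewrite cf_q_SS, cf_p_SS, !plus_INR, !mult_INR.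
    destruct (cf_digit_spec m) as [D _]; pose proof (Hgauss (S m)).
    set (A := INR (cf_digit alpha (S m))) in *; set (y := gauss alpha (S m)) in *.
    replace (/ gauss alpha m) with (A + y) in IH by lra.
    apply (Rmult_eq_reg_r y); [|lra].
    replace (alpha * ((A * INR (cf_q alpha (S m)) + INR (cf_q alpha m)) * / y
                      + INR (cf_q alpha (S m))) * y)
      with (alpha * (INR (cf_q alpha (S m)) * (A + y) + INR (cf_q alpha m))) by (field; lra).
    rewrite IH; field; lra.
Qed.

Lemma alpha_minus_eq m :
  alpha_minus alpha (S m) = INR (cf_q alpha m) / INR (cf_q alpha (S m)).
Proof.
  unfold alpha_minus; simpl pred; induction m as [|m IH]; [simpl; field|].
  rewrite seq_S, map_app, rev_app_distr; simpl (rev _); simpl app; cbn [cf_fin].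
  rewrite IH, cf_q_SS, plus_INR, mult_INR; replace (1 + m)%nat with (S m) by lia.
  destruct (cf_q_ge m) as [Hq _]; destruct (cf_digit_spec m) as [_ D].
  assert (1 <= INR (cf_q alpha (S m))) by (apply (le_INR 1); exact Hq).
  assert (1 <= INR (cf_digit alpha (S m))) by (apply (le_INR 1); exact D).
  pose proof (pos_INR (cf_q alpha m)).
  change (Z.to_nat (Int_part (/ gauss alpha m))) with (cf_digit alpha (S m)).
  field; split; nra.
Qed.

Lemma cf_Lambda_abs m :
  Rabs (cf_Lambda alpha (S m))
  = / (INR (cf_q alpha (S m)) * / gauss alpha m + INR (cf_q alpha m)).
Proof.
  pose proof (cf_complete_quotient_identity m) as Hid; pose proof (cf_det alpha m) as Hdet.
  unfold cf_Lambda; cbv zeta in Hdet.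
  set (q1 := INR (cf_q alpha (S m))) in *; set (q0 := INR (cf_q alpha m)) in *.
  set (p1 := INR (cf_p alpha (S m))) in *; set (p0 := INR (cf_p alpha m)) in *.
  pose proof (complete_quotient_gt_1 m) as Hb; set (b := / gauss alpha m) in *.
  assert (Hq1 : 1 <= q1) by (apply (le_INR 1), cf_q_ge).
  assert (Hq0 : 0 <= q0) by apply pos_INR.
  assert (Hd : q1 * p0 - p1 * q0 = 1 \/ q1 * p0 - p1 * q0 = -1).
  { unfold q1, q0, p1, p0; rewrite !INR_IZR_INZ, <- !mult_IZR, <- minus_IZR.
    destruct Hdet as [E|E]; rewrite E; auto. }
  replace (q1 * alpha - p1) with ((q1 * p0 - p1 * q0) / (q1 * b + q0)).
  - unfold Rdiv; rewrite Rabs_mult, (Rabs_pos_eq (/ _))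
      by (apply Rlt_le, Rinv_0_lt_compat; nra).
    destruct Hd as [D|D]; rewrite D; [rewrite Rabs_R1|rewrite Rabs_left by lra]; ring.
  - apply (Rmult_eq_reg_r (q1 * b + q0)); [|nra].
    replace ((q1 * alpha - p1) * (q1 * b + q0))
      with (q1 * (alpha * (q1 * b + q0)) - p1 * (q1 * b + q0)) by ring.
    rewrite Hid; field; nra.
Qed.

Lemma cf_Lambda_abs_bounds m :
  0 < Rabs (cf_Lambda alpha (S m))
  /\ Rabs (cf_Lambda alpha (S m)) * INR (cf_q alpha (S m)) < 1.
Proof.
  rewrite cf_Lambda_abs.
  pose proof (complete_quotient_gt_1 m) as Hb.
  assert (Hq1 : 1 <= INR (cf_q alpha (S m))) by (apply (le_INR 1), cf_q_ge).
  pose proof (pos_INR (cf_q alpha m)).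
  split; [apply Rinv_0_lt_compat; nra|].
  set (D := INR (cf_q alpha (S m)) * / gauss alpha m + INR (cf_q alpha m)).
  assert (HD : INR (cf_q alpha (S m)) < D) by (unfold D; nra).
  apply (Rmult_lt_reg_r D); [lra|].
  rewrite Rmult_assoc, (Rmult_comm (INR _)), <- Rmult_assoc, Rinv_l; lra.
Qed.

Lemma cf_c_eq m : cf_c alpha (S m) = INR (cf_q alpha (S m)) * Rabs (cf_Lambda alpha (S m)).
Proof.
  unfold cf_c, alpha_plus; simpl pred; rewrite alpha_minus_eq, cf_Lambda_abs.
  pose proof (complete_quotient_gt_1 m) as Hb.
  assert (Hq1 : 1 <= INR (cf_q alpha (S m))) by (apply (le_INR 1), cf_q_ge).
  pose proof (pos_INR (cf_q alpha m)); pose proof (Hgauss m).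
  field; split; [lra|split; nra].
Qed.

End ContinuedFraction.

Theorem lemma4p3 (alpha : R) (H0 : 0 < alpha) (H1 : alpha < 1)
  (Hirr : irrational alpha) :
  exists (K : R) (N : nat), forall n : nat, (N <= n)%nat ->
    Rabs (C_n alpha n - P_n alpha n) <= K / INR (kappa alpha n).
Proof.
  pose proof (gauss_in_unit_interval alpha (conj H0 H1) Hirr) as Hg.
  exists 100, 101%nat; intros n Hn; destruct n as [|m]; [lia|].
  destruct (cf_q_ge alpha Hg m) as [_ Hqm].
  destruct (cf_Lambda_abs_bounds alpha Hg m) as [HL HLq].
  destruct (Nat.sqrt_spec (cf_q alpha (S m))) as [Hs1 Hs2]; [lia|].
  unfold P_n; rewrite cf_c_eq by exact Hg.
  apply reflected_sine_product_estimate; unfold kappa in *; try nia; try assumption.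
  - apply xi_0.
  - intros t _; apply xi_bounds.
  - intros t Ht; apply xi_reflect; nia.
Qed.
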